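(* Fix a constant $c \in (0,1)$. For $\eta \in (0,1]$, $\omega \in [-c,c]$ and $\epsilon \in (0,1)$, let $f:[-1,1]\to\mathbb{C}$ be the $\eta$-scaled retarded Green's function $$f(x) = \frac{\eta}{(\omega + i\eta) - x}.$$ Then there is a polynomial $p_d$ (with complex coefficients) of degree $d = O\!\left(\frac{1}{\eta}\log\frac{1}{\epsilon}\right)$, where the implied constant depends only on $c$, such that $\|f - p_d\|_{[-1,1]} \le \epsilon$ and $\|p_d\|_{[-1,1]} \le 1+\epsilon$.
   Context: For a function $g$ on $[-1,1]$, $\|g\|_{[-1,1]} = \sup_{x\in[-1,1]} |g(x)|$ denotes the uniform norm; $i$ is the imaginary unit. *)

From mathcomp Require Import all_boot all_order all_algebra.
From mathcomp Require Export complex.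
From mathcomp Require Export reals exp.
Import GRing.Theory Num.Theory.
Local Open Scope ring_scope.
Local Open Scope complex_scope.

Definition green {R : realType} (eta omega : R) (x : R) : R[i] :=
  eta%:C / ((omega%:C + 'i * eta%:C) - x%:C).

Definition unif_le {R : realType} (g : R -> R[i]) (r : R) : Prop :=
  forall x : R, -1 <= x <= 1 -> `|g x| <= r%:C.

From mathcomp Require Import all_boot all_order all_algebra.
From mathcomp Require Import complex reals exp.
From mathcomp Require Import ring lra zify.
Import Order.TTheory GRing.Theory Num.Theory.
Local Open Scope ring_scope.
Local Open Scope complex_scope.

(* For eps >= 1/2 the constant -i/2 works: x |-> f(x) maps the real line into
   the circle |w + i/2| = 1/2.  Otherwise put u(x) = 1 - (x - omega)^2/2, which
   maps [-1,1] into [-1,1] and z = omega + i eta to a = 1 + eta^2/2, and let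
   Q = T_k o u.  Then p(x) = eta (1 - Q(x)/Q(z)) / (z - x) is a polynomial of
   degree < 2k with f - p = f Q / Q(z), hence |f - p| <= 1/T_k(a) on [-1,1].
   Since a + sqrt(a^2 - 1) >= 1 + eta, T_k(a) >= (1 + eta)^k / 2, and
   k = O(eta^-1 log eps^-1) suffices; |p| <= |f| + |f - p| <= 1 + eps. *)

Fixpoint chebyshev_pair {A : nzRingType} (u : A) (n : nat) : A * A :=
  if n is n'.+1 then
    let: (a, b) := chebyshev_pair u n' in (b, 2 * u * b - a)
  else (1, u).

Definition chebyshev {A : nzRingType} (u : A) (n : nat) : A :=
  (chebyshev_pair u n).1.

Lemma rmorph_chebyshev_pair {A B : nzRingType} (f : {rmorphism A -> B}) u n :
  chebyshev_pair (f u) n =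
    (f (chebyshev_pair u n).1, f (chebyshev_pair u n).2).
Proof.
elim: n => [|n /=]; first by rewrite /= rmorph1.
by case: (chebyshev_pair u n) => a b /= ->; rewrite rmorphB !rmorphM rmorph_nat.
Qed.

Lemma rmorph_chebyshev {A B : nzRingType} (f : {rmorphism A -> B}) u n :
  f (chebyshev u n) = chebyshev (f u) n.
Proof. by rewrite /chebyshev rmorph_chebyshev_pair. Qed.

Lemma horner_chebyshev {A : comNzRingType} (U : {poly A}) x n :
  (chebyshev U n).[x] = chebyshev U.[x] n.
Proof. exact: (rmorph_chebyshev (horner_eval x) U n). Qed.

Lemma size_chebyshev_pair {A : comNzRingType} (U : {poly A}) d n :
  (size U <= d.+1)%N ->
  (size (chebyshev_pair U n).1 <= (n * d).+1)%N /\
  (size (chebyshev_pair U n).2 <= (n.+1 * d).+1)%N.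
Proof.
move=> szU; elim: n => [|n /=]; first by rewrite size_poly1 mul1n.
case: (chebyshev_pair U n) => a b /= [sza szb]; split=> //.
rewrite (leq_trans (size_polyD _ _)) // size_polyN geq_max.
have sz2U : (size (2 * U)%R <= d.+1)%N.
  by rewrite -polyC_natr mul_polyC (leq_trans (size_scale_leq _ _)).
apply/andP; split; last by rewrite (leq_trans sza) //; clear; nia.
rewrite (leq_trans (size_polyMleq _ _)) //.
by move: sz2U szb; move: (size (2 * U)%R) (size b) => s t; clear; nia.
Qed.

Lemma size_chebyshev {A : comNzRingType} (U : {poly A}) d n :
  (size U <= d.+1)%N -> (size (chebyshev U n) <= (n * d).+1)%N.
Proof. by move=> /size_chebyshev_pair-/(_ n) []. Qed.

Lemma chebyshev_pair_closed {F : fieldType} (l m : F) n :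
  l * m = 1 -> 2 != 0 :> F ->
  chebyshev_pair ((l + m) / 2) n =
    ((l ^+ n + m ^+ n) / 2, (l ^+ n.+1 + m ^+ n.+1) / 2).
Proof.
move=> lm1 nz2; elim: n => [|n /= ->]; first by congr (_, _); field.
rewrite -[l ^+ n + m ^+ n]mul1r -[X in X * (l ^+ n + _)]lm1 !exprS.
by congr (_, _); field.
Qed.

Lemma chebyshev_closed {F : fieldType} (l m : F) n :
  l * m = 1 -> 2 != 0 :> F -> chebyshev ((l + m) / 2) n = (l ^+ n + m ^+ n) / 2.
Proof. by move=> lm1 nz2; rewrite /chebyshev chebyshev_pair_closed. Qed.

Lemma normc_real {R : rcfType} (x : R) : `|x%:C| = `|x|%:C.
Proof. by rewrite normc_def /= expr0n addr0 sqrtr_sqr. Qed.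

Lemma normc_ReIm {R : rcfType} (a b : R) :
  `|a%:C + 'i * b%:C| = (Num.sqrt (a ^+ 2 + b ^+ 2))%:C.
Proof. by rewrite normc_def /= !(mul0r, mulr0, mul1r, subr0, add0r, addr0). Qed.

Lemma norm_chebyshev_le1 {R : rcfType} (t : R) n :
  -1 <= t <= 1 -> `|chebyshev t n| <= 1.
Proof.
move=> /andP[t_ge t_le].
set s := Num.sqrt (1 - t ^+ 2).
have s2 : s ^+ 2 = 1 - t ^+ 2 by rewrite sqr_sqrtr // subr_ge0; nra.
set l := t%:C + 'i * s%:C; set m := t%:C + 'i * (- s)%:C.
have nz2 : 2 != 0 :> R[i] by rewrite pnatr_eq0.
have lm1 : l * m = 1.
  rewrite /l /m rmorphN.
  have -> : (t%:C + 'i * s%:C) * (t%:C + 'i * - s%:C) =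
      t%:C ^+ 2 - 'i ^+ 2 * s%:C ^+ 2 by ring.
  by rewrite sqr_i mulN1r opprK -!rmorphXn -rmorphD s2 subrKC.
have norm1 (b : R) : b ^+ 2 = s ^+ 2 -> `|t%:C + 'i * b%:C| = 1.
  by move=> b2; rewrite normc_ReIm b2 s2 subrKC sqrtr1.
have t_mid : t%:C = (l + m) / 2 by rewrite /l /m rmorphN; field.
rewrite -lecR -normc_real (rmorph_chebyshev (real_complex R)) /= t_mid.
rewrite chebyshev_closed // normrM normfV normr_nat ler_pdivrMr ?ltr0n //.
rewrite mul1r (le_trans (ler_normD _ _)) // !normrX !norm1 ?sqrrN // !expr1n.
by rewrite -mulr2n lexx.
Qed.

Lemma chebyshev_ge {R : rcfType} (a : R) n :
  1 <= a -> (a + Num.sqrt (a ^+ 2 - 1)) ^+ n / 2 <= chebyshev a n.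
Proof.
move=> a_ge1; set s := Num.sqrt (a ^+ 2 - 1).
have s2 : s ^+ 2 = a ^+ 2 - 1 by rewrite sqr_sqrtr // subr_ge0; nra.
have lm1 : (a + s) * (a - s) = 1 by rewrite mulrC -subr_sqr s2; ring.
have as_ge0 : 0 <= a - s by have := sqrtr_ge0 (a ^+ 2 - 1); nra.
have -> : chebyshev a n = ((a + s) ^+ n + (a - s) ^+ n) / 2.
  by rewrite -chebyshev_closed ?pnatr_eq0 //; congr chebyshev; field.
rewrite ler_pM2r ?invr_gt0 ?ltr0n //.
by rewrite lerDl exprn_ge0.
Qed.

Lemma chebyshev_growth {R : rcfType} (h : R) n :
  0 <= h -> (1 + h) ^+ n / 2 <= chebyshev (1 + h ^+ 2 / 2) n.
Proof.
move=> h_ge0; set a := 1 + h ^+ 2 / 2.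
have a_ge1 : 1 <= a by rewrite lerDl divr_ge0 ?sqr_ge0 ?ler0n.
have h_le : h <= Num.sqrt (a ^+ 2 - 1).
  rewrite -(ger0_norm h_ge0) -sqrtr_sqr ler_sqrt /a; have := sqr_ge0 (h ^+ 2); nra.
apply: (le_trans _ (chebyshev_ge _ n a_ge1)); rewrite ler_pM2r ?invr_gt0 ?ltr0n //.
apply: lerXn2r; rewrite ?nnegrE; [lra | | exact: lerD].
by have := sqrtr_ge0 (a ^+ 2 - 1); lra.
Qed.

Lemma pole_poly_approx {F : fieldType} (Q : {poly F}) (z c : F) :
  Q.[z] != 0 ->
  exists p : {poly F}, (size p < size Q)%N /\
    forall x, x != z -> c / (z - x) - p.[x] = c / (z - x) * (Q.[x] / Q.[z]).
Proof.
move=> Qz_neq0.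
have /factor_theorem [q Qq] : root (Q.[z]%:P - Q) z.
  by rewrite rootE !hornerE subrr.
exists ((- (c / Q.[z])) *: q); split.
  have Q_neq0 : Q != 0 by apply: contraNneq Qz_neq0 => ->; rewrite horner0.
  rewrite (leq_ltn_trans (size_scale_leq _ _)) //.
  have [-> | q_neq0] := eqVneq q 0; first by rewrite size_poly0 size_poly_gt0.
  have := size_polyD (Q.[z]%:P) (- Q).
  rewrite Qq size_mul ?polyXsubC_eq0 // size_XsubC addn2 size_polyN /=.
  move/leq_trans; apply; rewrite geq_max leqnn andbT.
  by rewrite (leq_trans (size_polyC_leq1 _)) ?size_poly_gt0.
move=> x x_neq_z.
have Qx : Q.[z] - Q.[x] = q.[x] * (x - z).
  by have := congr1 (horner^~ x) Qq; rewrite !hornerE.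
rewrite hornerZ.
have zx_neq0 : z - x != 0 by rewrite subr_eq0 eq_sym.
have -> : q.[x] = (Q.[z] - Q.[x]) / (x - z).
  by rewrite Qx mulfK // subr_eq0.
by field; rewrite Qz_neq0 zx_neq0 /= -oppr_eq0 opprB zx_neq0.
Qed.

Section Green.
Variables (R : realType) (eta omega : R).

Lemma green_denomE x :
  omega%:C + 'i * eta%:C - x%:C = (omega - x)%:C + 'i * eta%:C.
Proof. by rewrite rmorphB; ring. Qed.

Hypothesis eta_neq0 : eta != 0.

Lemma green_denom_gt0 x : 0 < (omega - x) ^+ 2 + eta ^+ 2.
Proof. by rewrite ltr_wpDl ?sqr_ge0 // exprn_even_gt0. Qed.

Lemma green_denom_neq0 x : omega%:C + 'i * eta%:C - x%:C != 0.
Proof. by rewrite -normr_gt0 green_denomE normc_ReIm ltcR sqrtr_gt0 green_denom_gt0. Qed.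

Lemma norm_green_le1 x : `|green eta omega x| <= 1.
Proof.
rewrite /green normrM normfV green_denomE normc_ReIm normc_real.
rewrite ler_pdivrMr ?ltcR ?sqrtr_gt0 ?green_denom_gt0 // mul1r lecR.
rewrite -sqrtr_sqr ler_sqrt ?(ltW (green_denom_gt0 _)) //.
by have := sqr_ge0 (omega - x); lra.
Qed.

Lemma norm_green_add_half_i x : `|green eta omega x + 'i / 2| = 2^-1.
Proof.
have nz := green_denom_neq0 x; rewrite green_denomE in nz.
set w := (omega - x)%:C + 'i * eta%:C in nz *.
have num : 2 * eta%:C + 'i * w = eta%:C + 'i * (omega - x)%:C.
  by rewrite /w mulrDr mulrA -expr2 sqr_i; ring.
rewrite /green green_denomE -/w.
have -> : eta%:C / w + 'i / 2 = (2 * eta%:C + 'i * w) / (2 * w).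
  by field.
rewrite num normrM normfV normrM normr_nat !normc_ReIm addrC.
by field; apply: lt0r_neq0; rewrite ltcR sqrtr_gt0 green_denom_gt0.
Qed.

End Green.

Lemma green_poly_approx {R : realType} (eta omega : R) k :
  0 < eta -> -1 <= omega <= 1 ->
  exists p : {poly R[i]}, (size p <= k.*2)%N /\
    unif_le (fun x => green eta omega x - p.[x%:C]) (2 / (1 + eta) ^+ k).
Proof.
move=> eta_gt0 /andP[omega_ge omega_le].
have eta_neq0 : eta != 0 by rewrite gt_eqF.
set z := omega%:C + 'i * eta%:C.
pose U : {poly R[i]} := 1 - 2^-1 *: ('X - (omega%:C)%:P) ^+ 2.
pose Q := chebyshev U k.
have QxE (x : R) : Q.[x%:C] = (chebyshev (1 - (x - omega) ^+ 2 / 2) k)%:C.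
  rewrite horner_chebyshev (rmorph_chebyshev (real_complex R)) /=; congr chebyshev.
  rewrite hornerD hornerN hornerZ horner_exp hornerXsubC -polyC1 hornerC.
  by rewrite !(rmorphB, rmorphM, rmorphXn, fmorphV, rmorph_nat, rmorph1) mulrC.
have QzE : Q.[z] = (chebyshev (1 + eta ^+ 2 / 2) k)%:C.
  rewrite horner_chebyshev (rmorph_chebyshev (real_complex R)) /=; congr chebyshev.
  rewrite hornerD hornerN hornerZ horner_exp hornerXsubC -polyC1 hornerC.
  have -> : z - omega%:C = 'i * eta%:C by rewrite /z; ring.
  rewrite exprMn sqr_i !(rmorphD, rmorphM, rmorphXn, fmorphV, rmorph_nat, rmorph1).
  by ring.
have growth := chebyshev_growth eta k (ltW eta_gt0).
have T_gt0 : 0 < chebyshev (1 + eta ^+ 2 / 2) k.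
  by apply: lt_le_trans growth; rewrite divr_gt0 ?exprn_gt0 // addr_gt0.
have [|p [size_p approx]] := pole_poly_approx Q z eta%:C.
  by rewrite QzE eq_complex /= eqxx andbT gt_eqF.
exists p; split.
  have size_U : (size U <= 3)%N.
    rewrite (leq_trans (size_polyD _ _)) // size_polyN geq_max size_poly1 /=.
    by rewrite (leq_trans (size_scale_leq _ _)) // size_exp_XsubC.
  by rewrite -ltnS -muln2 (leq_trans size_p) // size_chebyshev.
move=> x /andP[x_ge x_le].
rewrite approx; last by rewrite -subr_eq0 -oppr_eq0 opprB green_denom_neq0.
rewrite normrM -[X in _ <= X]mul1r; apply: ler_pM => //; first exact: norm_green_le1.
rewrite QxE QzE normrM normfV !normc_real -fmorphV -rmorphM lecR (gtr0_norm T_gt0).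
apply: (@le_trans _ _ (1 / chebyshev (1 + eta ^+ 2 / 2) k)).
  rewrite ler_pM2r ?invr_gt0 // norm_chebyshev_le1 //.
  have : 0 <= (2 - (x - omega)) * (2 + (x - omega)) by rewrite mulr_ge0 //; lra.
  by have := sqr_ge0 (x - omega); rewrite -subr_sqr; lra.
by rewrite div1r -[2 / _]invf_div lef_pV2 ?posrE // divr_gt0 // exprn_gt0 // addr_gt0.
Qed.

Lemma bernoulli_ineq {R : realDomainType} (h : R) n :
  -1 <= h -> 1 + n%:R * h <= (1 + h) ^+ n.
Proof.
move=> h_ge; elim: n => [|n IH]; first by rewrite mul0r addr0 expr0.
have h1_ge0 : 0 <= 1 + h by lra.
rewrite exprS -natr1 (le_trans _ (ler_wpM2l h1_ge0 IH)) //.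
rewrite -subr_ge0.
have -> : (1 + h) * (1 + n%:R * h) - (1 + (n%:R + 1) * h) = n%:R * h ^+ 2 by ring.
by rewrite mulr_ge0 ?ler0n ?sqr_ge0.
Qed.

Lemma exists_pow_ge2 {R : realType} (h : R) :
  0 < h <= 1 -> exists m : nat, 2 <= (1 + h) ^+ m /\ m%:R <= 2 / h.
Proof.
move=> /andP[h_gt0 h_le1]; exists (Num.truncn h^-1).+1.
have inv_ge1 : 1 <= h^-1 by rewrite invf_ge1.
have m_gt := truncnS_gt h^-1.
have m_le : (Num.truncn h^-1)%:R <= h^-1 by rewrite truncn_le invr_ge0 ltW.
split; last by rewrite -natr1 mulr_natl mulr2n; lra.
have h_ge : -1 <= h by lra.
apply: le_trans _ (bernoulli_ineq _ _ h_ge).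
by move: m_gt; rewrite -[h^-1]div1r ltr_pdivrMr // => ?; lra.
Qed.

Lemma exists_pow_ge {R : realType} (b y : R) :
  1 < b -> 1 <= y -> exists n : nat, y <= b ^+ n /\ n%:R <= ln y / ln b + 1.
Proof.
move=> b_gt1 y_ge1.
have b_gt0 : 0 < b by apply: lt_trans b_gt1.
have y_gt0 : 0 < y by apply: lt_le_trans y_ge1.
have lnb_gt0 : 0 < ln b by rewrite ln_gt0.
exists (Num.truncn (ln y / ln b)).+1; split.
  rewrite -ler_ln ?posrE ?exprn_gt0 // lnXn // -mulr_natl -ler_pdivrMr //.
  exact: ltW (truncnS_gt _).
by rewrite -natr1 lerD2r truncn_le divr_ge0 ?ln_ge0 // ltW.
Qed.

Lemma exists_pow_ge_div_eps {R : realType} (h eps : R) :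
  0 < h <= 1 -> 0 < eps <= 2^-1 ->
  exists k : nat, 2 / eps <= (1 + h) ^+ k /\ k%:R <= 6 / ln 2 * (h^-1 * ln eps^-1).
Proof.
move=> h_bd /andP[eps_gt0 eps_le].
have [h_gt0 _] := andP h_bd.
have ln2_gt0 : 0 < ln (2 : R) by rewrite ln_gt0 ?ltr1n.
set L := ln eps^-1.
have two_le_inv : 2 <= eps^-1 by rewrite -[2]invrK lef_pV2 ?posrE ?invr_gt0.
have q_ge1 : 1 <= L / ln 2.
  by rewrite ler_pdivlMr // mul1r ler_ln ?posrE ?(lt_le_trans _ two_le_inv).
have [m [m_pow m_le]] := exists_pow_ge2 _ h_bd.
have [|j [j_pow j_le]] := @exists_pow_ge R 2 (2 / eps) (ltr1n R 2).
  by rewrite -[2 / _]/(2 * eps^-1); nra.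
exists (m * j)%N; split.
  by rewrite exprM (le_trans j_pow) // lerXn2r ?nnegrE ?exprn_ge0 //; lra.
have j_le' : j%:R <= 3 * (L / ln 2).
  rewrite (le_trans j_le) // lnM ?posrE ?invr_gt0 // -/L.
  have -> : (ln 2 + L) / ln 2 = 1 + L / ln 2 by field; rewrite gt_eqF.
  lra.
rewrite natrM (le_trans (ler_pM _ _ m_le j_le')) ?ler0n //.
by rewrite [leRHS](_ : _ = 2 / h * (3 * (L / ln 2))) //; ring.
Qed.

Lemma unif_le_trans {R : realType} (g : R -> R[i]) (r s : R) :
  r <= s -> unif_le g r -> unif_le g s.
Proof. by move=> r_le_s g_le x x_bd; rewrite (le_trans (g_le x x_bd)) // lecR. Qed.

Lemma unif_le_approx {R : realType} (g h : R -> R[i]) (e : R) :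
  unif_le g 1 -> unif_le (fun x => g x - h x) e -> unif_le h (1 + e).
Proof.
move=> g_le gh_le x x_bd; rewrite -(subKr (g x) (h x)) rmorphD.
by rewrite (le_trans (ler_normB _ _)) // lerD ?g_le ?gh_le.
Qed.

Lemma green_poly_approx_log {R : realType} (eta omega eps : R) :
  0 < eta <= 1 -> -1 <= omega <= 1 -> 0 < eps <= 2^-1 ->
  exists p : {poly R[i]},
    ((size p).-1)%:R <= 12 / ln 2 * (eta^-1 * ln eps^-1) /\
    unif_le (fun x => green eta omega x - p.[x%:C]) eps.
Proof.
move=> eta_bd omega_bd /[dup] eps_bd /andP[eps_gt0 _].
have [eta_gt0 _] := andP eta_bd.
have [k [k_pow k_le]] := exists_pow_ge_div_eps _ _ eta_bd eps_bd.
have [p [size_p approx_p]] := green_poly_approx _ _ k eta_gt0 omega_bd.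
exists p; split.
  apply: (@le_trans _ _ (k.*2)%:R); first by rewrite ler_nat (leq_trans (leq_pred _)).
  rewrite -mul2n natrM.
  rewrite [leRHS](_ : _ = 2 * (6 / ln 2 * (eta^-1 * ln eps^-1))) ?ler_pM2l //.
  by ring.
apply: unif_le_trans approx_p.
by rewrite ler_pdivrMr ?exprn_gt0 ?addr_gt0 // mulrC -ler_pdivrMr.
Qed.

Theorem theorem3 (R : realType) (c : R) (hc : 0 < c < 1) :
  exists C : R, 0 < C /\
    forall eta omega eps : R,
      0 < eta <= 1 -> - c <= omega <= c -> 0 < eps < 1 ->
      exists p : {poly R[i]},
        ((size p).-1)%:R <= C * (eta^-1 * ln (eps^-1)) /\
        unif_le (fun x => green eta omega x - p.[x%:C]) eps /\
        unif_le (fun x => p.[x%:C]) (1 + eps).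
Proof.
have ln2_gt0 : 0 < ln (2 : R) by rewrite ln_gt0 ?ltr1n.
exists (12 / ln 2); split; first by rewrite divr_gt0.
move=> eta omega eps eta_bd omega_bd /andP[eps_gt0 eps_lt1].
have [eta_gt0 _] := andP eta_bd.
suff [p [deg_p approx_p]] : exists p : {poly R[i]},
    ((size p).-1)%:R <= 12 / ln 2 * (eta^-1 * ln eps^-1) /\
    unif_le (fun x => green eta omega x - p.[x%:C]) eps.
  exists p; do !split => //; apply: unif_le_approx approx_p => x _.
  by rewrite rmorph1 norm_green_le1 // gt_eqF.
have [eps_ge | eps_lt] := lerP 2^-1 eps; last first.
  have omega_bd' : -1 <= omega <= 1 by case/andP: hc; case/andP: omega_bd; lra.
  by apply: green_poly_approx_log => //; rewrite eps_gt0 ltW.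
exists (- ('i / 2))%:P; split.
  have bound_gt0 : 0 < 12 / ln 2 * (eta^-1 * ln eps^-1).
    by rewrite !mulr_gt0 ?invr_gt0 // ln_gt0 // invf_gt1.
  by rewrite size_polyC; case: (_ != 0); exact: ltW.
move=> x _; rewrite hornerC opprK norm_green_add_half_i ?gt_eqF //.
by rewrite (_ : 2^-1 = (2^-1 : R)%:C) ?lecR // fmorphV rmorph_nat.
Qed.
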